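(* Let $N$ be an odd positive integer and let $r\ge s\ge 2$, $r'\ge s'\ge2$ with $r\ge r'$ and $s\ge s'$, so that $\Phi_r^s\subset\Phi_{r'}^{s'}$. Then the diagram $$(\Phi_r^s)^{\mathrm{ab}}\to(\Phi_{r'}^{s'})^{\mathrm{ab}},\quad U':(\Phi_r^s)^{\mathrm{ab}}\to(\Phi_{r+1}^s)^{\mathrm{ab}},\quad U':(\Phi_{r'}^{s'})^{\mathrm{ab}}\to(\Phi_{r'+1}^{s'})^{\mathrm{ab}},\quad (\Phi_{r+1}^s)^{\mathrm{ab}}\to(\Phi_{r'+1}^{s'})^{\mathrm{ab}}$$ commutes, i.e. $U'$ followed by the inclusion-induced map $(\Phi_{r+1}^s)^{\mathrm{ab}}\to(\Phi_{r'+1}^{s'})^{\mathrm{ab}}$ equals the inclusion-induced map $(\Phi_r^s)^{\mathrm{ab}}\to(\Phi_{r'}^{s'})^{\mathrm{ab}}$ followed by $U'$. Consequently the Atkin operator $U$ commutes with the inclusion-induced morphism $(\Phi_r^s)^{\mathrm{ab}}\to(\Phi_{r'}^{s'})^{\mathrm{ab}}$.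
   Context: For $M\ge1$, $\Gamma_1(M)=\{\begin{pmatrix}a&b\\c&d\end{pmatrix}\in\mathrm{SL}_2(\mathbb{Z}) : c\equiv0,\ a\equiv d\equiv1 \pmod M\}$, $\Gamma_0(M)=\{c\equiv 0\pmod M\}$, and $\Gamma^0(2)=\{\begin{pmatrix}a&b\\c&d\end{pmatrix}\in\mathrm{SL}_2(\mathbb{Z}): b\equiv0\pmod 2\}$. For $r\ge s\ge2$, $\Phi_r^s:=\Gamma_1(N2^s)\cap\Gamma_0(2^r)$; $G^{\mathrm{ab}}$ denotes the abelianization of a group $G$. Let $t=\begin{pmatrix}1&0\\0&2\end{pmatrix}$. Then $\Phi_r^s\cap\Gamma^0(2)$ has index $2$ in $\Phi_r^s$, and $x\mapsto txt^{-1}$ is an isomorphism $\Phi_r^s\cap\Gamma^0(2)\to\Phi_{r+1}^s$. The operator $U':(\Phi_r^s)^{\mathrm{ab}}\to(\Phi_{r+1}^s)^{\mathrm{ab}}$ is the composite of the transfer $V:(\Phi_r^s)^{\mathrm{ab}}\to(\Phi_r^s\cap\Gamma^0(2))^{\mathrm{ab}}$ with the map induced by $x\mapsto txt^{-1}$; the Atkin operator $U\in\mathrm{End}((\Phi_r^s)^{\mathrm{ab}})$ is $U'$ followed by the map $(\Phi_{r+1}^s)^{\mathrm{ab}}\to(\Phi_r^s)^{\mathrm{ab}}$ induced by inclusion. *)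

(* Subgroups of SL_2(Z) realised as boolean predicates on
   2x2 rational matrices (so that t = diag(1,2) and its inverse make sense). *)
From mathcomp Require Import all_boot all_order all_algebra.
Set Implicit Arguments. Unset Strict Implicit. Unset Printing Implicit Defensive.
Import GRing.Theory Num.Theory.
Local Open Scope ring_scope.

Definition mat := 'M[rat]_2.

Definition ea (A : mat) := A ord0 ord0.
Definition eb (A : mat) := A ord0 ord_max.
Definition ec (A : mat) := A ord_max ord0.
Definition ed (A : mat) := A ord_max ord_max.

Definition isint (q : rat) : bool := denq q == 1.
Definition congr_mod (q : rat) (a : int) (M : nat) : bool :=
  isint q && (M%:Z %| numq q - a)%Z.

Definition SL2Z : pred mat := fun A =>
  [&& isint (ea A), isint (eb A), isint (ec A), isint (ed A) & \det A == 1].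

Definition Gamma1 (M : nat) : pred mat := fun A =>
  [&& SL2Z A, congr_mod (ec A) 0 M, congr_mod (ea A) 1 M & congr_mod (ed A) 1 M].

Definition Gamma0 (M : nat) : pred mat := fun A =>
  SL2Z A && congr_mod (ec A) 0 M.

Definition Gamma0up2 : pred mat := fun A =>
  SL2Z A && congr_mod (eb A) 0 2.

Definition Phi (N r s : nat) : pred mat := fun A =>
  Gamma1 (N * 2 ^ s) A && Gamma0 (2 ^ r) A.

Definition PhiH (N r s : nat) : pred mat := fun A =>
  Phi N r s A && Gamma0up2 A.

Inductive comm_sub (G : pred mat) : mat -> Prop :=
| comm_sub1 : comm_sub G 1
| comm_subC x y : G x -> G y -> comm_sub G (x^-1 * y^-1 * x * y)
| comm_subM a b : comm_sub G a -> comm_sub G b -> comm_sub G (a * b)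
| comm_subV a : comm_sub G a -> comm_sub G (a^-1).

(* x and y (elements of G) have the same image in G^ab *)
Definition ab_eq (G : pred mat) (x y : mat) : Prop := comm_sub G (x * y^-1).

(* (t1, t2) is a left transversal of H in G, H of index 2:
   every g in G lies in exactly one of t1 H, t2 H *)
Definition transversal2 (G H : pred mat) (t1 t2 : mat) : Prop :=
  [/\ G t1, G t2 & forall g, G g -> H (t1^-1 * g) != H (t2^-1 * g)].

Definition rep (H : pred mat) (t1 t2 g : mat) : mat :=
  if H (t1^-1 * g) then t1 else t2.

(* transfer G^ab -> H^ab computed with the transversal (t1, t2):
   x t_i = t_{sigma i} h_i, V(x) = h_1 h_2 *)
Definition transfer2 (H : pred mat) (t1 t2 x : mat) : mat :=
  ((rep H t1 t2 (x * t1))^-1 * x * t1) * ((rep H t1 t2 (x * t2))^-1 * x * t2).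

Definition tmat : mat :=
  \matrix_(i, j) (if i == j then (if i == ord0 then 1 else 2) else 0).

Definition conj_t (x : mat) : mat := tmat * x * tmat^-1.

Definition Uprime (N r s : nat) (t1 t2 x : mat) : mat :=
  conj_t (transfer2 (PhiH N r s) t1 t2 x).

(* For an index-two subgroup H = ker psi of K, the transfer K^ab -> H^ab is
   congruent modulo [H, H] to x * (g^-1 x g) when x lies in H and to x^2
   otherwise, for any g in K outside H, whatever the transversal.  The groups
   Phi_r^s >= Phi_r^s cap Gamma^0(2) and Phi_r'^s' >= Phi_r'^s' cap Gamma^0(2)
   are both cut out by the parity of the upper-right entry, and an element of
   Phi_r^s with odd b also lies in Phi_r'^s', so the two transfers of x agree
   in (Phi_r'^s' cap Gamma^0(2))^ab.  Conjugation by t = diag(1, 2) maps this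
   group into Phi_{r'+1}^s', which gives the first claim; the second follows
   by the inclusion Phi_{r'+1}^s' <= Phi_r'^s'. *)

From mathcomp Require Import all_boot all_order all_algebra ring zify.
Import GRing.Theory Num.Theory.
Local Open Scope ring_scope.
Set Implicit Arguments. Unset Strict Implicit. Unset Printing Implicit Defensive.

Record subgroup_pred (G : pred mat) : Prop := SubgroupPred {
  subgroup1 : G 1;
  subgroupM : forall a b, G a -> G b -> G (a * b);
  subgroupV : forall a, G a -> G a^-1;
  subgroup_unit : forall a, G a -> a \is a GRing.unit }.

Lemma subgroup_predI (G K : pred mat) :
  subgroup_pred G -> subgroup_pred K -> subgroup_pred (fun a => G a && K a).
Proof.
case=> G1 GM GV Gu [K1 KM KV _]; split=> [|a b|a|a] /=.
- by rewrite G1 K1.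
- by case/andP=> Ga Ka /andP[Gb Kb]; rewrite GM ?KM.
- by case/andP=> Ga Ka; rewrite GV ?KV.
- by case/andP=> /Gu.
Qed.

Lemma comm_sub_mono (G K : pred mat) z :
  (forall a, G a -> K a) -> comm_sub G z -> comm_sub K z.
Proof.
move=> GK; elim=> [|x y Gx Gy|a b _ Ha _ Hb|a _ Ha].
- exact: comm_sub1.
- exact: comm_subC (GK _ Gx) (GK _ Gy).
- exact: comm_subM.
- exact: comm_subV.
Qed.

Lemma ab_eq_mono (G K : pred mat) x y :
  (forall a, G a -> K a) -> ab_eq G x y -> ab_eq K x y.
Proof. exact: comm_sub_mono. Qed.

Section Abelianization.
Variable G : pred mat.
Hypothesis G_subgroup : subgroup_pred G.

Let G1 := subgroup1 G_subgroup.
Let GM := subgroupM G_subgroup.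
Let GV := subgroupV G_subgroup.
Let Gu := subgroup_unit G_subgroup.

Lemma comm_sub_in a : comm_sub G a -> G a.
Proof. by elim=> [|x y Gx Gy|c d _ Gc _ Gd|c _ Gc]; rewrite ?GM ?GV. Qed.

Lemma comm_sub_conj a g : comm_sub G a -> G g -> comm_sub G (g^-1 * a * g).
Proof.
move=> Ca Gg; have Ga := comm_sub_in Ca.
have -> : g^-1 * a * g = a * (a^-1 * g^-1 * a * g).
  by rewrite !mulrA mulrV ?Gu // mul1r.
exact/comm_subM/comm_subC.
Qed.

Lemma ab_eq_in x y : G y -> ab_eq G x y -> G x.
Proof.
move=> Gy /comm_sub_in Gxy.
by rewrite -(mulrVK (Gu Gy) x) GM.
Qed.

Lemma ab_eq_sym x y : G y -> ab_eq G x y -> ab_eq G y x.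
Proof.
move=> Gy Exy; have Gx := ab_eq_in Gy Exy.
by move/comm_subV: Exy; rewrite invrM ?unitrV ?Gu // invrK.
Qed.

Lemma ab_eq_trans y x z : G y -> ab_eq G x y -> ab_eq G y z -> ab_eq G x z.
Proof.
by move=> Gy Exy Eyz; have := comm_subM Exy Eyz; rewrite mulrA mulrVK ?Gu.
Qed.

Lemma ab_eq_mul x1 x2 y1 y2 : G y1 -> G y2 ->
  ab_eq G x1 y1 -> ab_eq G x2 y2 -> ab_eq G (x1 * x2) (y1 * y2).
Proof.
move=> Gy1 Gy2 E1 E2; have Gx1 := ab_eq_in Gy1 E1.
have := comm_subM (comm_sub_conj E2 (GV Gx1)) E1.
by rewrite /ab_eq invrK invrM ?Gu // !mulrA mulrVK ?Gu.
Qed.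

Lemma ab_eq_commute a b : G a -> G b -> ab_eq G (a * b) (b * a).
Proof.
move=> Ga Gb; have := comm_subC (GV Ga) (GV Gb).
by rewrite /ab_eq !invrK invrM ?Gu // !mulrA.
Qed.

Lemma ab_eq_conj g y : G g -> G y -> ab_eq G (g^-1 * y * g) y.
Proof.
move=> Gg Gy; have := comm_subC Gg (GV Gy).
by rewrite /ab_eq invrK.
Qed.

End Abelianization.

Section ConjugationMap.
Variables (H K : pred mat) (u : mat).
Hypotheses (H_subgroup : subgroup_pred H) (u_unit : u \is a GRing.unit).
Hypothesis conj_HK : forall y, H y -> K (u * y * u^-1).

Lemma conjmxM a b : u * (a * b) * u^-1 = (u * a * u^-1) * (u * b * u^-1).
Proof. by rewrite !mulrA mulrVK. Qed.

Lemma conjmxV a : a \is a GRing.unit -> u * a^-1 * u^-1 = (u * a * u^-1)^-1.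
Proof. by move=> ua; rewrite !invrM ?unitrMl ?unitrMr ?unitrV // invrK !mulrA. Qed.

Lemma comm_sub_conjmx z : comm_sub H z -> comm_sub K (u * z * u^-1).
Proof.
have Hu := subgroup_unit H_subgroup.
elim=> [|x y Hx Hy|a b _ Ka _ Kb|a Ha Ka].
- by rewrite mulr1 mulrV //; apply: comm_sub1.
- by rewrite !conjmxM !conjmxV ?Hu //; apply: comm_subC; apply: conj_HK.
- by rewrite conjmxM; apply: comm_subM.
- by rewrite conjmxV ?Hu ?(comm_sub_in H_subgroup) //; apply: comm_subV.
Qed.

Lemma ab_eq_conjmx x y : H y -> ab_eq H x y ->
  ab_eq K (u * x * u^-1) (u * y * u^-1).
Proof.
move=> Hy /comm_sub_conjmx; rewrite /ab_eq conjmxM conjmxV //.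
exact: subgroup_unit Hy.
Qed.

End ConjugationMap.

(* The index-two subgroup is given as [H := K && psi]: psi is the indicator of
   the kernel of a character K -> Z/2, so multiplicativity reads as below. *)
Section IndexTwo.
Variables (K psi : pred mat).
Hypothesis K_subgroup : subgroup_pred K.
Hypothesis psiM : forall a b, K a -> K b -> psi (a * b) = (psi a == psi b).

Let H := fun a => K a && psi a.
Let K1 := subgroup1 K_subgroup.
Let KM := subgroupM K_subgroup.
Let KV := subgroupV K_subgroup.
Let Ku := subgroup_unit K_subgroup.

Lemma psi1 : psi 1.
Proof. by have := psiM K1 K1; rewrite mulr1 eqxx. Qed.

Lemma psiV a : K a -> psi a^-1 = psi a.
Proof.
move=> Ka; have := psiM (KV Ka) Ka; rewrite mulVr ?Ku // psi1.
by case: (psi a^-1); case: (psi a).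
Qed.

Lemma psi_conj a y : K a -> K y -> psi (a^-1 * y * a) = psi y.
Proof.
move=> Ka Ky; rewrite !psiM ?KM ?KV // psiV //.
by case: (psi a); case: (psi y).
Qed.

Lemma ker_subgroup : subgroup_pred H.
Proof.
split=> [|a b|a|a]; rewrite /H.
- by rewrite K1 psi1.
- by case/andP=> Ka pa /andP[Kb pb]; rewrite KM // psiM // pa pb.
- by case/andP=> Ka pa; rewrite KV // psiV.
- by case/andP=> /Ku.
Qed.

Lemma ker_conj a y : K a -> H y -> H (a^-1 * y * a).
Proof. by move=> Ka /andP[Ky py]; rewrite /H psi_conj // !KM ?KV. Qed.

Lemma transversal2_psi t1 t2 : transversal2 K H t1 t2 -> psi t1 != psi t2.
Proof.
case=> Kt1 Kt2 /(_ t1 Kt1); rewrite /H mulVr ?Ku // K1 psi1 KM ?KV //=.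
by rewrite psiM ?KV // psiV //; case: (psi t1); case: (psi t2).
Qed.

Lemma transfer2E t1 t2 x : transversal2 K H t1 t2 -> K x ->
  transfer2 H t1 t2 x =
  if psi x then (t1^-1 * x * t1) * (t2^-1 * x * t2) else t2^-1 * (x * x) * t2.
Proof.
move=> T Kx; have t12 := transversal2_psi T; case: T => Kt1 Kt2 _.
have Hrep a : K a -> H (t1^-1 * (x * a)) = (psi t1 == (psi x == psi a)).
  by move=> Ka; rewrite /H !KM ?KV //= !psiM ?KV ?KM // psiV.
rewrite /transfer2 /rep !Hrep //.
move: t12; case: (psi x); case: (psi t1); case: (psi t2) => //= _.
all: by rewrite !mulrA ?(mulrK (Ku Kt1)).
Qed.

Lemma ab_eq_conj_coset a b y : K a -> K b -> psi a = psi b -> H y ->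
  ab_eq H (a^-1 * y * a) (b^-1 * y * b).
Proof.
move=> Ka Kb pab Hy.
have Hba : H (b^-1 * a) by rewrite /H KM ?KV // psiM ?KV // psiV // pab eqxx.
have -> : a^-1 * y * a = (b^-1 * a)^-1 * (b^-1 * y * b) * (b^-1 * a).
  by rewrite invrM ?unitrV ?Ku // invrK !mulrA !(mulrK (Ku Kb)).
exact: (ab_eq_conj ker_subgroup) (ker_conj Kb Hy).
Qed.

Lemma transfer2_ker t1 t2 x : transversal2 K H t1 t2 -> K x ->
  H (transfer2 H t1 t2 x).
Proof.
move=> T Kx; rewrite (transfer2E T Kx); case: T => Kt1 Kt2 _.
case px: (psi x).
- by apply: (subgroupM ker_subgroup); apply: ker_conj; rewrite // /H Kx px.
- by apply: ker_conj; rewrite // /H KM // psiM // eqxx.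
Qed.

Definition transfer2_rep (g x : mat) : mat :=
  if psi x then x * (g^-1 * x * g) else x * x.

Lemma transfer2_rep_ker g x : K g -> K x -> H (transfer2_rep g x).
Proof.
move=> Kg Kx; rewrite /transfer2_rep; case px: (psi x).
- by apply: (subgroupM ker_subgroup); rewrite ?ker_conj // /H Kx px.
- by rewrite /H KM // psiM // eqxx.
Qed.

Lemma transfer2_ab t1 t2 g x : transversal2 K H t1 t2 -> K g -> ~~ psi g ->
  K x -> ab_eq H (transfer2 H t1 t2 x) (transfer2_rep g x).
Proof.
move=> T Kg pg Kx; have t12 := transversal2_psi T.
rewrite (transfer2E T Kx) /transfer2_rep; case: T => Kt1 Kt2 _.
have Hconj a y : K a -> psi a -> H y -> ab_eq H (a^-1 * y * a) y.
  by move=> Ka pa; apply: (ab_eq_conj ker_subgroup); rewrite /H Ka.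
case px: (psi x).
- have Hx : H x by rewrite /H Kx px.
  have Hgx := ker_conj Kg Hx.
  have Hcoset a : K a -> ~~ psi a -> ab_eq H (a^-1 * x * a) (g^-1 * x * g).
    by move=> Ka /negbTE pa; apply: ab_eq_conj_coset => //; rewrite pa (negbTE pg).
  move: t12; case pt1: (psi t1); case pt2: (psi t2) => // _.
  + apply: (ab_eq_mul ker_subgroup) => //; first exact: Hconj.
    by apply: Hcoset; rewrite ?pt2.
  + apply: (ab_eq_trans ker_subgroup (y := (g^-1 * x * g) * x)).
    * exact: (subgroupM ker_subgroup).
    * apply: (ab_eq_mul ker_subgroup) => //; last exact: Hconj.
      by apply: Hcoset; rewrite ?pt1.
    * exact: (ab_eq_commute ker_subgroup).
- have Hxx : H (x * x) by rewrite /H KM // psiM // eqxx.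
  case pt2: (psi t2); first exact: Hconj.
  have := ab_eq_conj_coset Kt2 Kx (etrans pt2 (esym px)) Hxx.
  by rewrite mulKr ?Ku.
Qed.

End IndexTwo.

Lemma transfer2_restrict (K G psi : pred mat) t1 t2 u1 u2 x :
  subgroup_pred K -> subgroup_pred G -> (forall a, G a -> K a) ->
  (forall a b, K a -> K b -> psi (a * b) = (psi a == psi b)) ->
  transversal2 G (fun a => G a && psi a) t1 t2 ->
  transversal2 K (fun a => K a && psi a) u1 u2 -> G x ->
  ab_eq (fun a => K a && psi a)
    (transfer2 (fun a => G a && psi a) t1 t2 x)
    (transfer2 (fun a => K a && psi a) u1 u2 x).
Proof.
move=> K_subgroup G_subgroup GK psiM T U Gx.
have psiMG a b : G a -> G b -> psi (a * b) = (psi a == psi b).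
  by move=> /GK Ka /GK Kb; apply: psiM.
have [g Gg pg] : exists2 g, G g & ~~ psi g.
  case: (T) (transversal2_psi G_subgroup psiMG T) => Gt1 Gt2 _.
  by case pt1: (psi t1); [exists t2 => //; case: (psi t2) | exists t1; rewrite ?pt1].
have Hrep := transfer2_rep_ker K_subgroup psiM (GK _ Gg) (GK _ Gx).
apply: (ab_eq_trans (ker_subgroup K_subgroup psiM) Hrep).
- apply: ab_eq_mono (transfer2_ab G_subgroup psiMG T Gg pg Gx).
  by move=> a /andP[/GK -> ->].
- apply: (ab_eq_sym (ker_subgroup K_subgroup psiM) Hrep).
  exact: (transfer2_ab K_subgroup psiM U (GK g Gg) pg (GK x Gx)).
Qed.

Definition mx2 (a b c d : rat) : mat :=
  \matrix_(i, j) if i == ord0 then (if j == ord0 then a else b)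
                 else (if j == ord0 then c else d).

Lemma ea_mx2 a b c d : ea (mx2 a b c d) = a. Proof. by rewrite /ea mxE. Qed.
Lemma eb_mx2 a b c d : eb (mx2 a b c d) = b. Proof. by rewrite /eb mxE. Qed.
Lemma ec_mx2 a b c d : ec (mx2 a b c d) = c. Proof. by rewrite /ec mxE. Qed.
Lemma ed_mx2 a b c d : ed (mx2 a b c d) = d. Proof. by rewrite /ed mxE. Qed.
Definition mx2E := (ea_mx2, eb_mx2, ec_mx2, ed_mx2).

Lemma mx2_eta (A : mat) : A = mx2 (ea A) (eb A) (ec A) (ed A).
Proof.
apply/matrixP => i j; rewrite mxE /ea /eb /ec /ed.
by case: i j => [[|[|//]] ?] [[|[|//]] ?] /=; congr (A _ _); apply: val_inj.
Qed.

Lemma mx2_1 : mx2 1 0 0 1 = 1.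
Proof.
apply/matrixP => i j; rewrite !mxE.
by case: i j => [[|[|//]] ?] [[|[|//]] ?].
Qed.

Lemma mx2_mul a b c d a' b' c' d' :
  mx2 a b c d * mx2 a' b' c' d' =
  mx2 (a * a' + b * c') (a * b' + b * d') (c * a' + d * c') (c * b' + d * d').
Proof.
apply/matrixP => i j; rewrite !mxE !big_ord_recl big_ord0 !mxE addr0 /=.
by case: i j => [[|[|//]] ?] [[|[|//]] ?].
Qed.

Lemma det_mx2 a b c d : \det (mx2 a b c d) = a * d - b * c.
Proof.
rewrite (expand_det_row _ ord0) !big_ord_recl big_ord0 addr0 /cofactor !det_mx11.
by rewrite !mxE /= expr0 expr1 !mul1r mulN1r mulrN.
Qed.

Lemma mx2_unit a b c d : a * d - b * c != 0 -> mx2 a b c d \is a GRing.unit.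
Proof. by move=> h; rewrite -[_ \is a _]/(_ \in unitmx) unitmxE det_mx2 unitfE. Qed.

Lemma mx2_inv a b c d : a * d - b * c != 0 ->
  (mx2 a b c d)^-1 =
  mx2 (d / (a * d - b * c)) (- b / (a * d - b * c))
      (- c / (a * d - b * c)) (a / (a * d - b * c)).
Proof.
move=> det0; apply: (mulrI (mx2_unit det0)).
by rewrite mulrV ?mx2_unit // mx2_mul -mx2_1; congr mx2; field.
Qed.

Lemma tmat_mx2 : tmat = mx2 1 0 0 2.
Proof.
apply/matrixP => i j; rewrite !mxE.
by case: i j => [[|[|//]] ?] [[|[|//]] ?].
Qed.

Lemma tmat_unit : tmat \is a GRing.unit.
Proof. by rewrite tmat_mx2 mx2_unit // mulr0 subr0 mul1r. Qed.

Lemma conj_t_mx2 a b c d : conj_t (mx2 a b c d) = mx2 a (b / 2) (2 * c) d.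
Proof.
rewrite /conj_t tmat_mx2 mx2_inv; last by rewrite mulr0 subr0 mul1r.
by rewrite !mx2_mul; congr mx2; field.
Qed.

Definition mx2z (a b c d : int) : mat := mx2 a%:~R b%:~R c%:~R d%:~R.

Lemma mx2z_1 : mx2z 1 0 0 1 = 1.
Proof. exact: mx2_1. Qed.

Lemma mx2z_mul a b c d a' b' c' d' :
  mx2z a b c d * mx2z a' b' c' d' =
  mx2z (a * a' + b * c') (a * b' + b * d') (c * a' + d * c') (c * b' + d * d').
Proof. by rewrite mx2_mul /mx2z !intrD !intrM. Qed.

Lemma mx2z_inv a b c d : a * d - b * c = 1 ->
  (mx2z a b c d)^-1 = mx2z d (- b) (- c) a.
Proof.
move=> det1; have det1R : a%:~R * d%:~R - b%:~R * c%:~R = 1 :> rat.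
  by rewrite -!intrM -intrB det1.
by rewrite /mx2z mx2_inv det1R ?oner_eq0 // !divr1 !intrN.
Qed.

Lemma det2_mul (R : comPzRingType) (a b c d a' b' c' d' : R) :
  (a * a' + b * c') * (c * b' + d * d') - (a * b' + b * d') * (c * a' + d * c') =
  (a * d - b * c) * (a' * d' - b' * c').
Proof. by ring. Qed.

Lemma congr_mod_int (z a : int) M : congr_mod z%:~R a M = (M%:Z %| z - a)%Z.
Proof. by rewrite /congr_mod /isint denq_int numq_int eqxx. Qed.

Lemma SL2Z_mx2z a b c d : SL2Z (mx2z a b c d) = (a * d - b * c == 1).
Proof.
rewrite /SL2Z /isint !mx2E !denq_int /mx2z det_mx2 -!intrM -intrB.
by rewrite eqxx -[X in _ == X]/(1%:~R : rat) eqr_int.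
Qed.

Lemma SL2Z_mx2zP A : SL2Z A -> exists a b c d, A = mx2z a b c d.
Proof.
case/and5P=> ia ib ic id _.
exists (numq (ea A)), (numq (eb A)), (numq (ec A)), (numq (ed A)).
by rewrite /mx2z !numqK -?Qint_def // -mx2_eta.
Qed.

Lemma SL2Z_unit A : SL2Z A -> A \is a GRing.unit.
Proof.
move=> /[dup] /SL2Z_mx2zP [a [b [c [d ->]]]]; rewrite SL2Z_mx2z => /eqP det1.
by rewrite /mx2z mx2_unit // -!intrM -intrB det1 oner_eq0.
Qed.

Lemma Gamma1_mx2z M a b c d : Gamma1 M (mx2z a b c d) =
  [&& a * d - b * c == 1, (M%:Z %| c)%Z, (M%:Z %| a - 1)%Z & (M%:Z %| d - 1)%Z].
Proof. by rewrite /Gamma1 SL2Z_mx2z !mx2E !congr_mod_int subr0. Qed.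

Lemma Gamma0_mx2z R a b c d : Gamma0 R (mx2z a b c d) =
  (a * d - b * c == 1) && (R%:Z %| c)%Z.
Proof. by rewrite /Gamma0 SL2Z_mx2z !mx2E congr_mod_int subr0. Qed.

Lemma Gamma0up2_mx2z a b c d : Gamma0up2 (mx2z a b c d) =
  (a * d - b * c == 1) && (2 %| b)%Z.
Proof. by rewrite /Gamma0up2 SL2Z_mx2z !mx2E congr_mod_int subr0. Qed.

Lemma Gamma1_SL2Z M A : Gamma1 M A -> SL2Z A. Proof. by case/and4P. Qed.
Lemma Gamma0_SL2Z R A : Gamma0 R A -> SL2Z A. Proof. by case/andP. Qed.

Lemma Gamma1_subgroup M : subgroup_pred (Gamma1 M).
Proof.
split=> [|A B|A|A]; last by move/Gamma1_SL2Z/SL2Z_unit.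
- by rewrite -mx2z_1 Gamma1_mx2z !subrr mulr1 mulr0 subr0 eqxx dvdz0.
- move=> /[dup] /Gamma1_SL2Z /SL2Z_mx2zP [a [b [c [d ->]]]].
  move=> + /[dup] /Gamma1_SL2Z /SL2Z_mx2zP [a' [b' [c' [d' ->]]]].
  rewrite mx2z_mul !Gamma1_mx2z det2_mul.
  move=> /and4P[/eqP-> Mc Ma Md] /and4P[/eqP-> Mc' Ma' Md'].
  rewrite mulr1 eqxx (rpredD (dvdz_mulr _ Mc) (dvdz_mull _ Mc')) /=.
  have -> : a * a' + b * c' - 1 = (a - 1) * a' + (a' - 1) + b * c' by ring.
  have -> : c * b' + d * d' - 1 = c * b' + (d - 1) * d' + (d' - 1) by ring.
  by rewrite (rpredD (rpredD (dvdz_mulr _ Ma) Ma') (dvdz_mull _ Mc'))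
             (rpredD (rpredD (dvdz_mulr _ Mc) (dvdz_mulr _ Md)) Md').
- move=> /[dup] /Gamma1_SL2Z /SL2Z_mx2zP [a [b [c [d ->]]]].
  rewrite Gamma1_mx2z => /and4P[/eqP det1 Mc Ma Md].
  by rewrite mx2z_inv // Gamma1_mx2z mulrNN (mulrC d) det1 eqxx rpredN Ma Md Mc.
Qed.

Lemma Gamma0_subgroup R : subgroup_pred (Gamma0 R).
Proof.
split=> [|A B|A|A]; last by move/Gamma0_SL2Z/SL2Z_unit.
- by rewrite -mx2z_1 Gamma0_mx2z mulr1 mulr0 subr0 eqxx dvdz0.
- move=> /[dup] /Gamma0_SL2Z /SL2Z_mx2zP [a [b [c [d ->]]]].
  move=> + /[dup] /Gamma0_SL2Z /SL2Z_mx2zP [a' [b' [c' [d' ->]]]].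
  rewrite mx2z_mul !Gamma0_mx2z det2_mul => /andP[/eqP-> Rc] /andP[/eqP-> Rc'].
  by rewrite mulr1 eqxx (rpredD (dvdz_mulr _ Rc) (dvdz_mull _ Rc')).
- move=> /[dup] /Gamma0_SL2Z /SL2Z_mx2zP [a [b [c [d ->]]]].
  rewrite Gamma0_mx2z => /andP[/eqP det1 Rc].
  by rewrite mx2z_inv // Gamma0_mx2z mulrNN (mulrC d) det1 eqxx rpredN.
Qed.

Lemma Gamma1_dvd M M' A : (M' %| M)%N -> Gamma1 M A -> Gamma1 M' A.
Proof.
move=> dvdM /[dup] /Gamma1_SL2Z /SL2Z_mx2zP [a [b [c [d ->]]]].
have dvdMz : (M'%:Z %| M%:Z)%Z by rewrite dvdzE.
rewrite !Gamma1_mx2z => /and4P[-> Mc Ma Md].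
by rewrite !(dvdz_trans dvdMz).
Qed.

Lemma Gamma0_dvd R R' A : (R' %| R)%N -> Gamma0 R A -> Gamma0 R' A.
Proof.
move=> dvdR /[dup] /Gamma0_SL2Z /SL2Z_mx2zP [a [b [c [d ->]]]].
have dvdRz : (R'%:Z %| R%:Z)%Z by rewrite dvdzE.
by rewrite !Gamma0_mx2z => /andP[-> Rc]; rewrite (dvdz_trans dvdRz).
Qed.

Lemma dvdz2D (m n : int) : (2 %| m + n)%Z = ((2 %| m)%Z == (2 %| n)%Z).
Proof.
by case: (boolP (2 %| m)%Z); case: (boolP (2 %| n)%Z) => /= hm hn; apply/idP/idP; lia.
Qed.

Lemma Gamma0up2M M A B : (2 %| M)%N -> Gamma1 M A -> Gamma1 M B ->
  Gamma0up2 (A * B) = (Gamma0up2 A == Gamma0up2 B).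
Proof.
move=> M2 /[dup] /Gamma1_SL2Z /SL2Z_mx2zP [a [b [c [d ->]]]].
move=> + /[dup] /Gamma1_SL2Z /SL2Z_mx2zP [a' [b' [c' [d' ->]]]].
rewrite mx2z_mul !Gamma1_mx2z !Gamma0up2_mx2z det2_mul.
move=> /and4P[/eqP-> _ Ma _] /and4P[/eqP-> _ _ Md'].
have M2z : (2 %| M%:Z)%Z by rewrite dvdzE.
have even : (2 %| (a - 1) * b' + b * (d' - 1))%Z.
  exact: rpredD (dvdz_mulr _ (dvdz_trans M2z Ma)) (dvdz_mull _ (dvdz_trans M2z Md')).
have -> : a * b' + b * d' = (b + b') + ((a - 1) * b' + b * (d' - 1)) by ring.
by rewrite mulr1 !eqxx rpredDr // dvdz2D.
Qed.

Lemma conj_t_mx2z a k c d : conj_t (mx2z a (k * 2) c d) = mx2z a k (2 * c) d.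
Proof. by rewrite /mx2z conj_t_mx2 !intrM mulfK. Qed.

Lemma Gamma1_conj_t M A : Gamma0up2 A -> Gamma1 M A -> Gamma1 M (conj_t A).
Proof.
move=> /[dup] /andP[/SL2Z_mx2zP [a [b [c [d ->]]]] _].
rewrite Gamma0up2_mx2z => /andP[_ /dvdzP [k ->]].
rewrite conj_t_mx2z !Gamma1_mx2z => /and4P[det1 Mc -> ->].
by rewrite dvdz_mull // mulrA det1.
Qed.

Lemma Gamma0_conj_t R A : Gamma0up2 A -> Gamma0 R A -> Gamma0 (R * 2) (conj_t A).
Proof.
move=> /[dup] /andP[/SL2Z_mx2zP [a [b [c [d ->]]]] _].
rewrite Gamma0up2_mx2z => /andP[_ /dvdzP [k ->]].
rewrite conj_t_mx2z !Gamma0_mx2z => /andP[det1 Rc].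
by rewrite mulrA det1 PoszM mulrC dvdz_mul.
Qed.

Lemma Phi_subgroup N r s : subgroup_pred (Phi N r s).
Proof. exact: subgroup_predI (Gamma1_subgroup _) (Gamma0_subgroup _). Qed.

Lemma Phi_sub N r s r' s' A : (r' <= r)%N -> (s' <= s)%N ->
  Phi N r s A -> Phi N r' s' A.
Proof.
move=> hr hs /andP[G1A G0A].
rewrite /Phi (Gamma1_dvd _ G1A) ?(Gamma0_dvd _ G0A) ?dvdn_exp2l //.
by rewrite dvdn_mul ?dvdn_exp2l.
Qed.

Lemma Phi_Gamma0up2M N r s A B : (0 < s)%N -> Phi N r s A -> Phi N r s B ->
  Gamma0up2 (A * B) = (Gamma0up2 A == Gamma0up2 B).
Proof.
move=> s0 /andP[G1A _] /andP[G1B _].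
by rewrite (Gamma0up2M _ G1A G1B) ?dvdn_mull ?dvdn_exp.
Qed.

Lemma PhiH_conj_t N r s A : PhiH N r s A -> Phi N r.+1 s (conj_t A).
Proof.
case/andP=> /andP[G1A G0A] evenA.
by rewrite /Phi Gamma1_conj_t // expnSr Gamma0_conj_t.
Qed.

Theorem lemma3p2 (N r s r' s' : nat) :
  odd N -> (0 < N)%N ->
  (2 <= s)%N -> (s <= r)%N -> (2 <= s')%N -> (s' <= r')%N ->
  (r' <= r)%N -> (s' <= s)%N ->
  forall t1 t2 u1 u2 : mat,
  transversal2 (Phi N r s) (PhiH N r s) t1 t2 ->
  transversal2 (Phi N r' s') (PhiH N r' s') u1 u2 ->
  forall x : mat, Phi N r s x ->
    (* inclusion o U'  =  U' o inclusion  in (Phi_{r'+1}^{s'})^ab *)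
    ab_eq (Phi N r'.+1 s') (Uprime N r s t1 t2 x) (Uprime N r' s' u1 u2 x) /\
    (* consequently: inclusion o U = U o inclusion in (Phi_{r'}^{s'})^ab *)
    ab_eq (Phi N r' s') (Uprime N r s t1 t2 x) (Uprime N r' s' u1 u2 x).
Proof.
move=> _ _ _ _ hs' _ hr hs t1 t2 u1 u2 T U x Px.
have psiM := @Phi_Gamma0up2M N r' s' _ _ (ltnW hs').
have sub := @Phi_sub N r s r' s' _ hr hs.
have Vx : ab_eq (PhiH N r' s')
    (transfer2 (PhiH N r s) t1 t2 x) (transfer2 (PhiH N r' s') u1 u2 x).
  exact: (transfer2_restrict (Phi_subgroup _ _ _) (Phi_subgroup _ _ _) sub psiM T U Px).
have U'x : ab_eq (Phi N r'.+1 s') (Uprime N r s t1 t2 x) (Uprime N r' s' u1 u2 x).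
  apply: (ab_eq_conjmx (ker_subgroup (Phi_subgroup _ _ _) psiM) tmat_unit) Vx.
    exact: PhiH_conj_t.
  exact: (transfer2_ker (Phi_subgroup _ _ _) psiM U (sub _ Px)).
by split=> //; apply: ab_eq_mono U'x => A; apply: Phi_sub.
Qed.
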